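(* Let $\Sigma=\{(x,y)\in\mathbb{R}^2_+ : x+y=1\}$. Let $S\subset\mathbb{R}^2_+\setminus\{(0,0)\}$ be a connected set such that, for some $R>0$, $S\cap\{(0,y) : y\in(0,R)\}\neq\emptyset$ and $S\cap\{(x,0) : x\in(0,R)\}\neq\emptyset$. Let $\pi:S\to\Sigma$ be the projection along positive rays, $\pi(x,y)=\big(\tfrac{x}{x+y},\tfrac{y}{x+y}\big)$, and let $G:S\to\Sigma$ be continuous. Then the multivalued map $H=\pi^{-1}\circ G:S\multimap S$ (where $\pi^{-1}(z)=\{s\in S:\pi(s)=z\}$) has at least one fixed point, i.e. there exists $s\in S$ with $s\in\pi^{-1}(G(s))$, equivalently $\pi(s)=G(s)$.
   Context: $\mathbb{R}^2_+$ denotes the closed positive quadrant $\{(x,y):x\ge0,\,y\ge0\}$. *)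

From Stdlib Require Import Reals.
Open Scope R_scope.

Definition pt := (R * R)%type.

Definition dist2 (p q : pt) : R :=
  sqrt ((fst p - fst q)^2 + (snd p - snd q)^2).

Definition open2 (U : pt -> Prop) : Prop :=
  forall p, U p -> exists eps, 0 < eps /\ forall q, dist2 p q < eps -> U q.

Definition connected2 (S : pt -> Prop) : Prop :=
  ~ (exists U V : pt -> Prop,
        open2 U /\ open2 V /\
        (forall p, S p -> U p \/ V p) /\
        (exists p, S p /\ U p) /\
        (exists p, S p /\ V p) /\
        (forall p, S p -> U p -> V p -> False)).

Definition quadrant (p : pt) : Prop := 0 <= fst p /\ 0 <= snd p.

Definition Sigma (p : pt) : Prop := quadrant p /\ fst p + snd p = 1.

Definition proj_ray (p : pt) : pt :=
  (fst p / (fst p + snd p), snd p / (fst p + snd p)).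

Definition proj_inv (S : pt -> Prop) (z : pt) : pt -> Prop :=
  fun s => S s /\ proj_ray s = z.

Definition continuous_on2 (S : pt -> Prop) (G : pt -> pt) : Prop :=
  forall s, S s -> forall eps, 0 < eps ->
    exists delta, 0 < delta /\
      forall t, S t -> dist2 s t < delta -> dist2 (G s) (G t) < eps.

(* With [cross2 p z = x_p y_z - y_p x_z], a point [s] of the quadrant minus the
   origin satisfies [pi s = G s] exactly when [cross2 s (G s) = 0].  This function
   is continuous on [S], it is [<= 0] at the point [(0, y)] of [S] and [>= 0] at
   the point [(x, 0)], so the intermediate value theorem on the connected set [S]
   gives a zero. *)
From Stdlib Require Import Reals Rgeom Lra Psatz Classical.
Open Scope R_scope.

Lemma dist2_euc (p q : pt) : dist2 p q = dist_euc (fst p) (snd p) (fst q) (snd q).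
Proof. unfold dist2, dist_euc; rewrite !Rsqr_pow2; reflexivity. Qed.

Lemma dist2_nonneg (p q : pt) : 0 <= dist2 p q.
Proof. apply sqrt_pos. Qed.

Lemma dist2_triangle (p q r : pt) : dist2 p r <= dist2 p q + dist2 q r.
Proof. rewrite !dist2_euc; apply triangle. Qed.

Lemma dist2_refl (p : pt) : dist2 p p = 0.
Proof. unfold dist2; rewrite !Rminus_diag; replace (0 ^ 2 + 0 ^ 2) with 0 by ring; apply sqrt_0. Qed.

Lemma Rabs_fst_le_dist2 (p q : pt) : Rabs (fst p - fst q) <= dist2 p q.
Proof.
  unfold dist2; rewrite <- sqrt_Rsqr_abs; apply sqrt_le_1_alt.
  rewrite Rsqr_pow2; pose proof (pow2_ge_0 (snd p - snd q)); lra.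
Qed.

Lemma Rabs_snd_le_dist2 (p q : pt) : Rabs (snd p - snd q) <= dist2 p q.
Proof.
  unfold dist2; rewrite <- sqrt_Rsqr_abs; apply sqrt_le_1_alt.
  rewrite Rsqr_pow2; pose proof (pow2_ge_0 (fst p - fst q)); lra.
Qed.

Definition continuous_real_on2 (S : pt -> Prop) (f : pt -> R) : Prop :=
  forall s, S s -> forall eps, 0 < eps ->
    exists delta, 0 < delta /\
      forall t, S t -> dist2 s t < delta -> Rabs (f t - f s) < eps.

Lemma continuous_real_on2_opp (S : pt -> Prop) (f : pt -> R) :
  continuous_real_on2 S f -> continuous_real_on2 S (fun t => - f t).
Proof.
  intros Hf s Ss eps Heps.
  destruct (Hf s Ss eps Heps) as [delta [Hdelta Hclose]].
  exists delta; split; [exact Hdelta|].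
  intros t St Hst; rewrite <- Rabs_Ropp; replace (- (- f t - - f s)) with (f t - f s) by ring.
  auto.
Qed.

Section ConnectedIVT.

Variables (S : pt -> Prop) (f : pt -> R).

(* An open set of the plane whose trace on [S] is exactly [{f < 0}]: the union of
   the balls around points of [S] on which [f] stays negative. *)
Definition negative_nbhd (q : pt) : Prop :=
  exists s d, S s /\ 0 < d /\ dist2 s q < d /\
    forall t, S t -> dist2 s t < d -> f t < 0.

Lemma negative_nbhd_open : open2 negative_nbhd.
Proof.
  intros q [s [d [Ss [Hd [Hsq Hneg]]]]].
  exists (d - dist2 s q); split; [lra|].
  intros r Hqr; exists s, d; repeat split; auto.
  pose proof (dist2_triangle s q r); lra.
Qed.

Lemma negative_nbhd_neg (t : pt) : S t -> negative_nbhd t -> f t < 0.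
Proof. intros St [s [d [_ [_ [Hst Hneg]]]]]; auto. Qed.

Lemma negative_nbhd_of_neg (p : pt) :
  continuous_real_on2 S f -> S p -> f p < 0 -> negative_nbhd p.
Proof.
  intros Hf Sp Hp.
  destruct (Hf p Sp (- f p) ltac:(lra)) as [d [Hd Hclose]].
  exists p, d; repeat split; auto.
  - rewrite dist2_refl; exact Hd.
  - intros t St Hpt; specialize (Hclose t St Hpt).
    pose proof (Rle_abs (f t - f p)); lra.
Qed.

End ConnectedIVT.

Theorem connected2_ivt (S : pt -> Prop) (f : pt -> R) (p q : pt) :
  connected2 S -> continuous_real_on2 S f ->
  S p -> f p <= 0 -> S q -> 0 <= f q -> exists s, S s /\ f s = 0.
Proof.
  intros Hconn Hf Sp Hp Sq Hq.
  apply NNPP; intros Hno.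
  assert (Hnz : forall s, S s -> f s <> 0) by (intros s Ss Hs; apply Hno; eauto).
  set (g := fun t => - f t).
  assert (Hg : continuous_real_on2 S g) by now apply continuous_real_on2_opp.
  apply Hconn; exists (negative_nbhd S f), (negative_nbhd S g).
  repeat split.
  - apply negative_nbhd_open.
  - apply negative_nbhd_open.
  - intros t St; specialize (Hnz t St).
    destruct (Rlt_or_le (f t) 0) as [Hneg|Hnneg].
    + left; now apply negative_nbhd_of_neg.
    + right; apply negative_nbhd_of_neg; auto; unfold g; lra.
  - exists p; split; auto; apply negative_nbhd_of_neg; auto.
    specialize (Hnz p Sp); lra.
  - exists q; split; auto; apply negative_nbhd_of_neg; auto.
    specialize (Hnz q Sq); unfold g; lra.
  - intros t St Hneg Hpos.
    apply negative_nbhd_neg in Hneg; apply negative_nbhd_neg in Hpos; auto.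
    unfold g in Hpos; lra.
Qed.

Definition cross2 (p z : pt) : R := fst p * snd z - snd p * fst z.

Lemma proj_ray_of_cross2_eq0 (p z : pt) :
  quadrant p -> p <> (0, 0) -> Sigma z -> cross2 p z = 0 -> proj_ray p = z.
Proof.
  destruct p as [x y], z as [a b]; unfold quadrant, Sigma, cross2, proj_ray; simpl.
  intros [Hx Hy] Hne [_ Hab] Hcross.
  assert (Hxy : 0 < x + y).
  { destruct (Req_dec x 0), (Req_dec y 0); subst; try lra.
    exfalso; apply Hne; reflexivity. }
  assert (Ex : x = a * (x + y)) by nra.
  assert (Ey : y = b * (x + y)) by nra.
  f_equal; [rewrite Ex at 1 | rewrite Ey at 1]; field; lra.
Qed.

Lemma cross2_diff_bound (p q z w : pt) : Sigma w ->
  Rabs (cross2 q w - cross2 p z)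
    <= 2 * dist2 p q + (Rabs (fst p) + Rabs (snd p)) * dist2 z w.
Proof.
  destruct p as [xp yp], q as [xq yq], z as [a b], w as [a' b'].
  unfold Sigma, quadrant, cross2; simpl; intros [[Ha' Hb'] Hab'].
  pose proof (Rabs_fst_le_dist2 (xp, yp) (xq, yq)) as Hx.
  pose proof (Rabs_snd_le_dist2 (xp, yp) (xq, yq)) as Hy.
  pose proof (Rabs_fst_le_dist2 (a, b) (a', b')) as Ha.
  pose proof (Rabs_snd_le_dist2 (a, b) (a', b')) as Hb.
  simpl in *.
  replace (xq * b' - yq * a' - (xp * b - yp * a))
    with ((xq - xp) * b' + xp * (b' - b) - (yq - yp) * a' - yp * (a' - a)) by ring.
  rewrite Rabs_minus_sym in Hx, Hy, Ha, Hb.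
  assert (Hsplit : forall u v r t, Rabs (u + v - r - t) <= Rabs u + Rabs v + Rabs r + Rabs t).
  { intros u v r t; unfold Rminus.
    pose proof (Rabs_triang (u + v + - r) (- t)); pose proof (Rabs_triang (u + v) (- r)).
    pose proof (Rabs_triang u v); rewrite Rabs_Ropp in *; lra. }
  eapply Rle_trans; [apply Hsplit|].
  rewrite !Rabs_mult, (Rabs_pos_eq b'), (Rabs_pos_eq a') by lra.
  pose proof (Rabs_pos (xq - xp)); pose proof (Rabs_pos (yq - yp)).
  pose proof (Rabs_pos xp); pose proof (Rabs_pos yp).
  pose proof (Rabs_pos (b' - b)); pose proof (Rabs_pos (a' - a)).
  nra.
Qed.

Lemma continuous_cross2_ray (S : pt -> Prop) (G : pt -> pt) :
  (forall s, S s -> Sigma (G s)) -> continuous_on2 S G ->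
  continuous_real_on2 S (fun t => cross2 t (G t)).
Proof.
  intros HGmap HGcont s Ss eps Heps.
  set (C := Rabs (fst s) + Rabs (snd s)).
  assert (HC : 0 <= C) by (pose proof (Rabs_pos (fst s)); pose proof (Rabs_pos (snd s)); unfold C; lra).
  destruct (HGcont s Ss (eps / (2 * (C + 1)))) as [dG [HdG HG]].
  { apply Rdiv_lt_0_compat; lra. }
  exists (Rmin (eps / 4) dG); split; [apply Rmin_pos; lra|].
  intros t St Hst.
  pose proof (Rmin_l (eps / 4) dG); pose proof (Rmin_r (eps / 4) dG).
  assert (HGst : dist2 (G s) (G t) < eps / (2 * (C + 1))) by (apply HG; auto; lra).
  assert (HCG : C * dist2 (G s) (G t) <= eps / 2).
  { apply Rle_trans with ((C + 1) * (eps / (2 * (C + 1)))).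
    - pose proof (dist2_nonneg (G s) (G t)); nra.
    - right; field; lra. }
  pose proof (cross2_diff_bound s t (G s) (G t) (HGmap t St)) as Hbound.
  fold C in Hbound; lra.
Qed.

Theorem lemma2p1 (S : pt -> Prop) (G : pt -> pt)
  (HSsub : forall p, S p -> quadrant p /\ p <> (0, 0))
  (HSconn : connected2 S)
  (HR : exists R0, 0 < R0 /\
          (exists y, 0 < y < R0 /\ S (0, y)) /\
          (exists x, 0 < x < R0 /\ S (x, 0)))
  (HGmap : forall s, S s -> Sigma (G s))
  (HGcont : continuous_on2 S G) :
  exists s, S s /\ proj_inv S (G s) s.
Proof.
  destruct HR as [R0 [_ [[y [Hy Sy]] [x [Hx Sx]]]]].
  destruct (connected2_ivt S (fun t => cross2 t (G t)) (0, y) (x, 0) HSconn)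
    as [s [Ss Hs]]; auto.
  - now apply continuous_cross2_ray.
  - destruct (HGmap _ Sy) as [[Ha _] _]; unfold cross2; simpl; nra.
  - destruct (HGmap _ Sx) as [[_ Hb] _]; unfold cross2; simpl; nra.
  - destruct (HSsub s Ss) as [Hq Hne].
    exists s; split; [exact Ss|split; [exact Ss|]].
    apply proj_ray_of_cross2_eq0; auto.
Qed.
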